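(* Consider the problem $\min_{x\in\mathbb{R}^p} F(x):=f(x)+g(x)$, where: (i) $f:\mathbb{R}^p\to\mathbb{R}$ is $L$-smooth ($\|\nabla f(x)-\nabla f(y)\|\le L\|x-y\|$ for all $x,y$) and $g:\mathbb{R}^p\to\mathbb{R}\cup\{\infty\}$ is proper, lower semicontinuous and directionally differentiable; (ii) $F$ is bounded below; (iii) $g$ is prox-bounded, i.e. $g+\frac{\eta}{2}\|\cdot\|^2$ is bounded below for some $\eta>0$. Let $\{(x_t,\eta_t):t\ge0\}$ be generated by the following algorithm (GIST), run indefinitely: fix $\rho>1$, $0<\underline\eta<\overline\eta$, $\sigma\in(0,1)$ and an integer $r\ge1$, and start from $x_0\in\operatorname{dom}F$. At iteration $t$, choose $\hat\eta_t\in[\underline\eta,\overline\eta]$; for $l=0,1,2,\dots$ set $\eta_t=\rho^l\hat\eta_t$ and compute $x_{t+1}\in\operatorname{Prox}_{g/\eta_t}\big(x_t-\frac1{\eta_t}\nabla f(x_t)\big)$, stopping at the first $l$ for which $$F(x_{t+1})\le \max\{F(x_{t-r+1}),\dots,F(x_t)\}-\frac{\sigma\eta_t}{2}\|x_{t+1}-x_t\|^2$$ (where only indices $\ge 0$ are used in the maximum). If the generated sequence $\{x_t\}$ is bounded and $F$ is continuous on a compact set containing the sequence, then any accumulation point of $\{x_t\}$ is a d-stationary point of $F$.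
   Context: $\|\cdot\|$ is the Euclidean norm. $\operatorname{Prox}_{g/\eta}(y):=\operatorname{argmin}_{x\in\mathbb{R}^p}\{\tfrac1\eta g(x)+\tfrac12\|x-y\|^2\}$. The directional derivative is $F'(x;d):=\lim_{\tau\to+0}\frac{F(x+\tau d)-F(x)}{\tau}$ (possibly $+\infty$). A point $x^*$ is a d(irectional)-stationary point of $F$ if $F$ is directionally differentiable at $x^*$ (i.e. $F'(x^*;d)$ exists for all $d$) and $F'(x^*;d)\ge0$ for all $d\in\mathbb{R}^p$. *)

From HB Require Import structures.
From mathcomp Require Import all_boot all_order all_algebra.
From mathcomp Require Import all_classical all_reals all_analysis.
Set Implicit Arguments. Unset Strict Implicit. Unset Printing Implicit Defensive.
Import Order.TTheory GRing.Theory Num.Theory.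
Import numFieldNormedType.Exports.
Local Open Scope classical_set_scope.
Local Open Scope ring_scope.

Section GIST.
Variables (R : realType) (p : nat).
Notation V := 'rV[R]_p.

Definition dotv (u v : V) : R := \sum_(i < p) u ord0 i * v ord0 i.
Definition enorm (u : V) : R := Num.sqrt (dotv u u).

Definition is_gradient (f : V -> R) (gradf : V -> V) : Prop :=
  forall x, differentiable f x /\ forall v, 'd f x v = dotv (gradf x) v.

Definition L_smooth (L : R) (gradf : V -> V) : Prop :=
  forall x y, enorm (gradf x - gradf y) <= L * enorm (x - y).

Definition proper_fun (g : V -> \bar R) : Prop :=
  (forall x, g x != -oo%E) /\ exists x, (g x < +oo)%E.

Definition diff_quot (F : V -> \bar R) (x d : V) (tau : R) : \bar R :=
  ((F (x + tau *: d)%R - F x) * (tau^-1)%:E)%E.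

Definition has_dir_deriv (F : V -> \bar R) (x d : V) (l : \bar R) : Prop :=
  diff_quot F x d tau @[tau --> 0^'+] --> l.

Definition dir_differentiable_at (F : V -> \bar R) (x : V) : Prop :=
  F x \is a fin_num /\ forall d, exists l, has_dir_deriv F x d l.

Definition d_stationary (F : V -> \bar R) (x : V) : Prop :=
  dir_differentiable_at F x /\
  forall d l, has_dir_deriv F x d l -> (0 <= l)%E.

Definition is_prox (g : V -> \bar R) (eta : R) (y z : V) : Prop :=
  forall x, ((eta^-1)%:E * g z + (2^-1 * enorm (z - y) ^+ 2)%:E
             <= (eta^-1)%:E * g x + (2^-1 * enorm (x - y) ^+ 2)%:E)%E.

Definition Fmax_window (F : V -> \bar R) (x : nat -> V) (r t : nat) : \bar R :=
  \big[Order.max/-oo%E]_(i < r | (i <= t)%N) F (x (t - i)%N).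

Definition accept (F : V -> \bar R) (x : nat -> V) (r : nat) (sigma : R)
    (t : nat) (eta : R) (z : V) : Prop :=
  (F z <= Fmax_window F x r t - (sigma * eta / 2 * enorm (z - x t) ^+ 2)%:E)%E.

(* {(x_t, eta_t)} is generated by GIST with parameters rho, eta_lo, eta_hi,
   sigma, r: hat eta_t, l_t are the chosen initial step and number of
   backtracking steps; each rejected trial l < l_t produced some prox point
   failing the test, and trial l_t produced x_{t+1} passing it. *)
Definition GIST_sequence (f : V -> R) (gradf : V -> V) (g : V -> \bar R)
    (rho eta_lo eta_hi sigma : R) (r : nat)
    (x : nat -> V) (eta : nat -> R) : Prop :=
  let F := fun y => ((f y)%:E + g y)%E in
  (F (x 0%N) < +oo)%E /\
  exists (heta : nat -> R) (l : nat -> nat),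
  forall t,
    [/\ eta_lo <= heta t <= eta_hi,
        eta t = rho ^+ l t * heta t,
        (forall l', (l' < l t)%N ->
           exists z, is_prox g (rho ^+ l' * heta t)
                       (x t - (rho ^+ l' * heta t)^-1 *: gradf (x t)) z /\
                     ~ accept F x r sigma t (rho ^+ l' * heta t) z),
        is_prox g (eta t) (x t - (eta t)^-1 *: gradf (x t)) (x t.+1)
      & accept F x r sigma t (eta t) (x t.+1)].

Definition accumulation_point (x : nat -> V) (xs : V) : Prop :=
  forall eps : R, 0 < eps -> forall N, exists2 t, (N <= t)%N & enorm (x t - xs) < eps.

End GIST.

(* The line search stops at bounded steps: a trial step eta with
   eta (1 - sigma) >= 2|L| always passes the test, by the descent lemma and the
   prox inequality at the test point x_t.  The windowed maxima of F(x_t) are then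
   nonincreasing and bounded below, and since F, truncated at F(x_0), is
   uniformly continuous on the compact set K, the usual nonmonotone line-search
   argument gives |x_{t+1} - x_t| -> 0.  So along x_t -> xs also x_{t+1} -> xs,
   and passing to the limit in the prox inequality for an arbitrary test point y,
   using lower semicontinuity of g, yields
     g xs <= g y + <grad f xs, y - xs> + eta_max / 2 |y - xs|^2.
   Taking y = xs + tau d gives g'(xs; d) >= - <grad f xs, d>, that is
   F'(xs; d) >= 0. *)

From HB Require Import structures.
From mathcomp Require Import all_boot all_order all_algebra.
From mathcomp Require Import all_classical all_reals all_analysis.
From mathcomp Require Import ring lra zify.
Import Order.TTheory GRing.Theory Num.Theory.
Import numFieldNormedType.Exports.
Local Open Scope classical_set_scope.
Local Open Scope ring_scope.
Set Implicit Arguments. Unset Strict Implicit. Unset Printing Implicit Defensive.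

Section Euclidean.
Variables (R : realType) (p : nat).
Implicit Types (u v w : 'rV[R]_p) (a : R).

Lemma dotvC u v : dotv u v = dotv v u.
Proof. by apply: eq_bigr => i _; rewrite mulrC. Qed.

Lemma dotvDl u v w : dotv (u + v) w = dotv u w + dotv v w.
Proof. by rewrite /dotv -big_split; apply: eq_bigr => i _; rewrite mxE mulrDl. Qed.

Lemma dotvZl a u v : dotv (a *: u) v = a * dotv u v.
Proof. by rewrite /dotv mulr_sumr; apply: eq_bigr => i _; rewrite mxE mulrA. Qed.

Lemma dotvNl u v : dotv (- u) v = - dotv u v.
Proof. by rewrite -scaleN1r dotvZl mulN1r. Qed.

Lemma dotvBl u v w : dotv (u - v) w = dotv u w - dotv v w.
Proof. by rewrite dotvDl dotvNl. Qed.

Lemma dotvDr u v w : dotv u (v + w) = dotv u v + dotv u w.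
Proof. by rewrite dotvC dotvDl !(dotvC u). Qed.

Lemma dotvZr a u v : dotv u (a *: v) = a * dotv u v.
Proof. by rewrite dotvC dotvZl dotvC. Qed.

Lemma dotvNr u v : dotv u (- v) = - dotv u v.
Proof. by rewrite dotvC dotvNl dotvC. Qed.

Lemma dotvBr u v w : dotv u (v - w) = dotv u v - dotv u w.
Proof. by rewrite dotvDr dotvNr. Qed.

Lemma dotv0l v : dotv 0 v = 0.
Proof. by rewrite -(scale0r 0) dotvZl mul0r. Qed.

Lemma dotv0r u : dotv u 0 = 0.
Proof. by rewrite dotvC dotv0l. Qed.

Lemma dotvv_ge0 u : 0 <= dotv u u.
Proof. by apply: sumr_ge0 => i _; rewrite -expr2 sqr_ge0. Qed.

Lemma enorm_ge0 u : 0 <= enorm u.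
Proof. exact: sqrtr_ge0. Qed.

Lemma enorm_sqr u : enorm u ^+ 2 = dotv u u.
Proof. by rewrite sqr_sqrtr // dotvv_ge0. Qed.

Lemma enorm0 : enorm (0 : 'rV[R]_p) = 0.
Proof. by rewrite /enorm dotv0l sqrtr0. Qed.

Lemma normr_coord_le u i : `|u ord0 i| <= enorm u.
Proof.
rewrite -sqrtr_sqr ler_wsqrtr // /dotv (bigD1 i) //= -expr2 lerDl.
by apply: sumr_ge0 => j _; rewrite -expr2 sqr_ge0.
Qed.

Lemma dotvv_eq0 u : dotv u u = 0 -> u = 0.
Proof.
move=> uu0; apply/rowP => i; rewrite mxE; apply/eqP; rewrite -normr_le0.
by apply: le_trans (normr_coord_le u i) _; rewrite /enorm uu0 sqrtr0.
Qed.

Lemma dotv_Cauchy_Schwarz u v : dotv u v ^+ 2 <= dotv u u * dotv v v.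
Proof.
have [/dotvv_eq0 ->|uu0] := eqVneq (dotv u u) 0.
  by rewrite !dotv0l expr0n mul0r.
have uu_gt0 : 0 < dotv u u by rewrite lt_def uu0 dotvv_ge0.
have := dotvv_ge0 (dotv u u *: v - dotv u v *: u).
rewrite dotvBl !dotvBr !dotvZl !dotvZr (dotvC v u).
have -> : dotv u u * (dotv u u * dotv v v) - dotv u u * (dotv u v * dotv u v)
  - (dotv u v * (dotv u u * dotv u v) - dotv u v * (dotv u v * dotv u u))
  = dotv u u * (dotv u u * dotv v v - dotv u v ^+ 2) by ring.
by rewrite pmulr_rge0 // subr_ge0.
Qed.

Lemma normr_dotv_le u v : `|dotv u v| <= enorm u * enorm v.
Proof.
rewrite -sqrtr_sqr /enorm -sqrtrM ?dotvv_ge0 // ler_wsqrtr //.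
exact: dotv_Cauchy_Schwarz.
Qed.

Lemma dotv_le u v : dotv u v <= enorm u * enorm v.
Proof. exact: le_trans (ler_norm _) (normr_dotv_le u v). Qed.

Lemma dotv_le_perturb u v u0 v0 :
  dotv u v <= dotv u0 v0 + enorm (u - u0) * enorm v + enorm u0 * enorm (v - v0).
Proof.
have -> : dotv u v = dotv u0 v0 + dotv (u - u0) v + dotv u0 (v - v0).
  by rewrite dotvBl dotvBr; ring.
by rewrite -!addrA lerD2l lerD ?dotv_le.
Qed.

Lemma sqr_enormD u v :
  enorm (u + v) ^+ 2 = enorm u ^+ 2 + 2 * dotv u v + enorm v ^+ 2.
Proof. by rewrite !enorm_sqr dotvDl !dotvDr (dotvC v u); ring. Qed.

Lemma ler_enormD u v : enorm (u + v) <= enorm u + enorm v.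
Proof.
rewrite -ler_sqr ?nnegrE ?addr_ge0 ?enorm_ge0 // sqr_enormD sqrrD.
have := dotv_le u v; lra.
Qed.

Lemma enormN u : enorm (- u) = enorm u.
Proof. by rewrite /enorm dotvNl dotvNr opprK. Qed.

Lemma enorm_distC u v : enorm (u - v) = enorm (v - u).
Proof. by rewrite -enormN opprB. Qed.

Lemma ler_enorm_distD u v w : enorm (u - w) <= enorm (u - v) + enorm (w - v).
Proof. by rewrite -(subrKA v) (le_trans (ler_enormD _ _)) // (enorm_distC v). Qed.

Lemma enormZ a u : enorm (a *: u) = `|a| * enorm u.
Proof.
by rewrite /enorm dotvZl dotvZr mulrA -expr2 sqrtrM ?sqr_ge0 // sqrtr_sqr.
Qed.

Lemma enorm_ball u v e : enorm (v - u) < e -> ball u e v.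
Proof.
move=> vu_lt; split; first exact: le_lt_trans (enorm_ge0 _) vu_lt.
move=> i j; rewrite /ball /= (ord1 i) -normrN opprB.
by apply: le_lt_trans vu_lt; have := normr_coord_le (v - u) j; rewrite !mxE.
Qed.

End Euclidean.

Section Smooth.
Variables (R : realType) (p : nat) (f : 'rV[R]_p -> R) (gradf : 'rV[R]_p -> 'rV[R]_p).
Hypothesis gradfP : is_gradient f gradf.

Lemma is_derive_along_line (w v : 'rV[R]_p) (s : R) :
  is_derive s 1 (fun s : R => f (w + s *: v)) (dotv (gradf (w + s *: v)) v).
Proof.
set y := w + s *: v.
have quotE : (fun h : R => h^-1 *: (((fun s => f (w + s *: v)) \o shift s) (h *: 1)
      - f y)) = (fun h : R => h^-1 *: ((f \o shift y) (h *: v) - f y)).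
  apply: funext => h /=; congr (_ *: (f _ - _)).
  by rewrite /y scalerDl addrCA; congr (_ *: _ + _); exact: mulr1.
have [fdiff dfE] := gradfP y.
split; first by rewrite /derivable quotE; exact: diff_derivable.
by rewrite /derive quotE -/(derive f y v) deriveE.
Qed.

Lemma L_smooth_descent L (w z : 'rV[R]_p) : L_smooth L gradf ->
  f z <= f w + dotv (gradf w) (z - w) + `|L| * enorm (z - w) ^+ 2.
Proof.
move=> gradf_lip; set v := z - w; set c := dotv (gradf w) v.
pose h s := f (w + s *: v) - s * c.
have h_derive s : is_derive s (1 : R) h (dotv (gradf (w + s *: v)) v - c).
  apply: is_deriveB; first exact: is_derive_along_line.
  have := is_deriveM (is_derive_id s (1 : R)) (is_derive_cst c s 1).
  by move=> H; apply: is_derive_eq H _; rewrite /= scaler0 add0r /cst scaler1.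
have h_cont : {within `[0, 1], continuous h}.
  apply: continuous_subspaceT => s; apply: differentiable_continuous.
  by apply/derivable1_diffP; have [] := h_derive s.
have [t /andP[t_ge0 t_le1] mvt] := MVT ltr01 (fun s _ => h_derive s) h_cont.
move: mvt; rewrite /h subr0 mulr1 scale1r scale0r addr0 mul0r subr0 mul1r.
rewrite (_ : w + v = z) => [mvt|]; last by rewrite addrC subrK.
move: t_ge0 t_le1; rewrite !bnd_simp => t_gt0 t_lt1.
have -> : f z = f w + c + (dotv (gradf (w + t *: v)) v - c) by rewrite -mvt; ring.
rewrite lerD2l -dotvBl; apply: le_trans (dotv_le _ _) _.
rewrite expr2 mulrA ler_wpM2r ?enorm_ge0 //; apply: le_trans (gradf_lip _ _) _.
rewrite addrAC subrr add0r enormZ gtr0_norm //.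
have tv_le : t * enorm v <= enorm v by rewrite ler_piMl ?enorm_ge0 // ltW.
apply: le_trans (ler_wpM2l (normr_ge0 L) tv_le).
by rewrite ler_wpM2r ?ler_norm // mulr_ge0 ?enorm_ge0 // ltW.
Qed.

Lemma is_gradient_dir_quot (x d : 'rV[R]_p) :
  (fun tau : R => (f (x + tau *: d) - f x) * tau^-1) @ 0^'+ --> dotv (gradf x) d.
Proof.
have [fdiff dfE] := gradfP x.
have : (fun h : R => h^-1 *: ((f \o shift x) (h *: d) - f x)) @ 0^' --> 'D_d f x.
  exact: diff_derivable.
rewrite deriveE // dfE => /cvg_dnbhs_at_right; apply: cvg_trans; apply: near_eq_cvg.
by near=> h; rewrite /= [h *: d + x]addrC mulrC.
Unshelve. all: end_near.
Qed.

End Smooth.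

Section NearModel.
Variables (R : realType) (p : nat).
Implicit Types (y xs w z : 'rV[R]_p).

Lemma sqr_enorm_le_near y xs w : enorm (w - xs) <= 1 ->
  enorm (y - w) ^+ 2 <= enorm (y - xs) ^+ 2 + enorm (w - xs) * (2 * enorm (y - xs) + 1).
Proof.
move=> w_le1; rewrite !enorm_sqr.
apply: le_trans (dotv_le_perturb _ _ (y - xs) (y - xs)) _.
rewrite opprB [_ + (xs - y)]addrC subrKA (enorm_distC xs) -enorm_sqr -!addrA lerD2l.
have := ler_enorm_distD y xs w; have := enorm_ge0 (w - xs); nra.
Qed.

Lemma L_smooth_dotv_le_near L (gradf : 'rV[R]_p -> 'rV[R]_p) y xs w z :
  L_smooth L gradf -> enorm (z - xs) <= 1 ->
  dotv (gradf w) (y - z) <= dotv (gradf xs) (y - xs)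
    + `|L| * enorm (w - xs) * (enorm (y - xs) + 1) + enorm (gradf xs) * enorm (z - xs).
Proof.
move=> gradf_lip z_le1.
apply: le_trans (dotv_le_perturb _ _ (gradf xs) (y - xs)) _.
rewrite opprB [_ + (xs - y)]addrC subrKA (enorm_distC xs) -!addrA lerD2l lerD2r.
have grad_le : enorm (gradf w - gradf xs) <= `|L| * enorm (w - xs).
  by apply: le_trans (gradf_lip _ _) _; rewrite ler_wpM2r ?enorm_ge0 ?ler_norm.
apply: le_trans (ler_pM (enorm_ge0 _) (enorm_ge0 _) grad_le (ler_enorm_distD y xs z)) _.
by rewrite ler_wpM2l ?mulr_ge0 ?enorm_ge0 // lerD2l.
Qed.

Lemma L_smooth_model_near L (gradf : 'rV[R]_p -> 'rV[R]_p) y xs (H e : R) :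
  L_smooth L gradf -> 0 <= H -> 0 < e ->
  exists2 del, 0 < del & forall w z, enorm (w - xs) < del -> enorm (z - xs) < del ->
    dotv (gradf w) (y - z) + H * enorm (y - w) ^+ 2
      <= dotv (gradf xs) (y - xs) + H * enorm (y - xs) ^+ 2 + e.
Proof.
move=> gradf_lip H_ge0 e_gt0.
set G := enorm (gradf xs); set Y := enorm (y - xs).
set C := `|L| * (Y + 1) + G + H * (2 * Y + 1).
have [G_ge0 Y_ge0] : 0 <= G /\ 0 <= Y by rewrite !enorm_ge0.
have coef_ge0 : 0 <= `|L| * (Y + 1) + H * (2 * Y + 1).
  by rewrite addr_ge0 ?mulr_ge0 //; lra.
have C_ge0 : 0 <= C by rewrite /C addrAC addr_ge0.
exists (Num.min 1 (e / (C + 1))) => [|w z].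
  by rewrite lt_min ltr01 divr_gt0 ?ltr_wpDl.
rewrite !lt_min => /andP[/ltW w_le1 w_lt] /andP[/ltW z_le1 z_lt].
have := L_smooth_dotv_le_near y w gradf_lip z_le1.
have := ler_wpM2l H_ge0 (sqr_enorm_le_near y w_le1); rewrite -/G -/Y.
set del := e / (C + 1) in w_lt z_lt.
have del_gt0 : 0 < del by rewrite divr_gt0 ?ltr_wpDl.
have Cdel : C * del = e - del by rewrite /del; field; rewrite gt_eqF ?ltr_wpDl.
have dw_le : (`|L| * (Y + 1) + H * (2 * Y + 1)) * enorm (w - xs)
    <= (`|L| * (Y + 1) + H * (2 * Y + 1)) * del.
  by rewrite ler_wpM2l // ltW.
have dz_le : G * enorm (z - xs) <= G * del by rewrite ler_wpM2l ?enorm_ge0 ?ltW.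
rewrite /C !mulrDl in Cdel dw_le; lra.
Qed.

End NearModel.

Section Topology.
Variable R : realType.

Lemma within_continuous_fine_min (T : topologicalType) (K : set T)
    (F : T -> \bar R) (c : R) :
  (forall v, F v != -oo%E) -> {within K, continuous F} ->
  {within K, continuous (fun v => fine (Order.min (F v) c%:E))}.
Proof.
move=> F_ninfty F_cont v.
have min_fin : Order.min (F v) c%:E \is a fin_num.
  by case: (F v) (F_ninfty v) => [a| |] //= _; rewrite ?minEle ?leey //; case: ifP.
apply: fine_cvg; rewrite fineK //.
exact: continuous2_cvg (@min_continuous _ _ (F v, c%:E)) (F_cont v) (cvg_cst _).
Qed.

Lemma compact_unif_continuous (T : pseudoMetricType R) (K : set T) (h : T -> R) (e : R) :
  compact K -> {within K, continuous h} -> 0 < e ->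
  exists2 del, 0 < del & forall u v, K u -> K v -> ball u del v -> `|h u - h v| < e.
Proof.
move=> K_compact h_cont e_gt0; apply: contrapT => no_del.
have bad n : exists uv : T * T, [/\ K uv.1, K uv.2, ball uv.1 n.+1%:R^-1 uv.2
    & e <= `|h uv.1 - h uv.2|].
  apply: contrapT => no_uv; apply: no_del; exists n.+1%:R^-1 => // u v Ku Kv uv.
  by rewrite ltNge; apply/negP => e_le; apply: no_uv; exists (u, v).
have [uv uvP] := choice bad.
have : ((fun n => (uv n).1) @ \oo) K by exists 0%N => // n _; have [] := uvP n.
move=> /(K_compact _ _) [z [Kz z_cluster]].
have e2_gt0 : 0 < e / 2 by rewrite divr_gt0.
have h_at_z : h @ within K (nbhs z) --> h z.
  by have := h_cont z; rewrite /continuous_at nbhs_subspace_in.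
have /nbhs_ballP [rh /= rh_gt0 near_z] :
    nbhs z [set w | K w -> `|h z - h w| < e / 2].
  exact: (cvgrPdist_lt _ _).1 h_at_z _ e2_gt0.
have rh2_gt0 : 0 < rh / 2 by rewrite divr_gt0.
have [N _ N_lt] := near_infty_natSinv_lt (PosNum rh2_gt0).
have [_ [[n N_le ->] z_u]] := z_cluster [set w | exists2 n, (N <= n)%N & w = (uv n).1]
  (ball z (rh / 2)) (ex_intro2 _ _ N I (fun n Nn => ex_intro2 _ _ n Nn erefl))
  (nbhsx_ballx z (rh / 2) rh2_gt0).
have [Ku Kv u_v e_le] := uvP n.
have z_v : ball z rh (uv n).2.
  rewrite (splitr rh); apply: ball_triangle z_u _.
  by apply: le_ball u_v; apply/ltW/N_lt.
have rh2_le : rh / 2 <= rh by lra.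
have := near_z _ (le_ball rh2_le z_u) Ku; have := near_z _ z_v Kv.
have := ler_distD (h z) (h (uv n).1) (h (uv n).2).
by rewrite (distrC (h (uv n).1) (h z)); lra.
Qed.

End Topology.

Section ExtendedRealFunctions.
Variables (R : realType) (p : nat).
Implicit Types (g : 'rV[R]_p -> \bar R) (x d : 'rV[R]_p).

Lemma lower_semicontinuous_le g x (c : R) : lower_semicontinuous g ->
  (forall e, 0 < e -> exists z, enorm (z - x) < e /\ (g z <= (c + e)%:E)%E) ->
  (g x <= c%:E)%E.
Proof.
move=> g_lsc approx; rewrite leNgt; apply/negP => c_lt.
have [e e_gt0 ce_lt] : exists2 e, 0 < e & ((c + e)%:E < g x)%E.
  case: (g x) c_lt => [a| |] //= ca; last by exists 1; rewrite ?ltry.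
  by exists ((a - c) / 2); rewrite ?lte_fin in ca *; lra.
have [U /nbhs_ballP[rh /= rh_gt0 ballU] gU] := g_lsc x (c + e) ce_lt.
have [|z [zx_lt gz_le]] := approx (Num.min rh e); first by rewrite lt_min rh_gt0.
move: zx_lt; rewrite lt_min => /andP[/enorm_ball/ballU/gU ce_lt_gz _].
have := lt_le_trans ce_lt_gz gz_le; rewrite lte_fin ltrD2l lt_min ltxx.
by rewrite andbF.
Qed.

Lemma has_dir_deriv_ge g x d (c K : R) (l : \bar R) : g x \is a fin_num ->
  (forall tau, 0 < tau -> (g x <= g (x + tau *: d)%R + (tau * c + tau ^+ 2 * K)%:E)%E) ->
  has_dir_deriv g x d l -> ((- c)%:E <= l)%E.
Proof.
move=> gx_fin minorant quot_cvg; apply/lee_addgt0Pr => e e_gt0.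
suff : ((- c - e)%:E <= l)%E.
  by case: l {quot_cvg} => [a| |] //=; rewrite ?lee_fin ?leey //; lra.
apply: cvge_to_ge quot_cvg _; near=> tau.
have tau_gt0 : 0 < tau by near: tau; exact: nbhs_right_gt.
have K1_gt0 : 0 < `|K| + 1 by rewrite ltr_wpDl.
have tauK_lt : tau * `|K| < e.
  have : tau < e / (`|K| + 1) by near: tau; apply: nbhs_right_lt; rewrite divr_gt0.
  rewrite ltr_pdivlMr // mulrDr mulr1; lra.
rewrite /diff_quot -(fineK gx_fin).
have := minorant _ tau_gt0; rewrite -(fineK gx_fin).
case: (g (x + tau *: d)) => [b| |] //=; last first.
  by move=> _; rewrite /= mulyr gtr0_sg ?invr_gt0 // mul1e leey.
rewrite -!EFinD -EFinM !lee_fin ler_pdivlMr // => gx_le.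
have : tau ^+ 2 * K <= tau * e.
  rewrite expr2 -mulrA ler_wpM2l ?(ltW tau_gt0) //.
  by apply: le_trans (ltW tauK_lt); rewrite ler_wpM2l ?ler_norm ?(ltW tau_gt0).
lra.
Unshelve. all: end_near.
Qed.

Lemma has_dir_deriv_gradient_add f gradf g x d l :
  is_gradient f gradf -> g x \is a fin_num -> has_dir_deriv g x d l ->
  has_dir_deriv (fun y => ((f y)%:E + g y)%E) x d ((dotv (gradf x) d)%:E + l)%E.
Proof.
move=> gradfP gx_fin g_cvg.
have f_cvg : (fun tau => ((f (x + tau *: d) - f x) * tau^-1)%:E) @ 0^'+
    --> (dotv (gradf x) d)%:E.
  by apply/fine_cvgP; split; [exact: nearW | exact: is_gradient_dir_quot].
have sum_def : ((dotv (gradf x) d)%:E +? l)%E by exact: fin_num_adde_defr.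
apply: cvg_trans _ (cvgeD sum_def f_cvg g_cvg); apply: near_eq_cvg; near=> tau.
have tau_inv_gt0 : 0 < tau^-1 by rewrite invr_gt0; near: tau; exact: nbhs_right_gt.
rewrite /diff_quot -(fineK gx_fin).
case: (g (x + tau *: d)) => [b| |] /=.
- by rewrite -!EFinD -EFinM; congr (_%:E); ring.
- by rewrite !mulyr gtr0_sg // !mul1e.
- by rewrite !mulNyr gtr0_sg // !mul1e.
Unshelve. all: end_near.
Qed.

End ExtendedRealFunctions.

Lemma is_prox_le (R : realType) (p : nat) (g : 'rV[R]_p -> \bar R) (eta : R)
    (w D y z : 'rV[R]_p) :
  0 < eta -> (forall v, g v != -oo%E) ->
  is_prox g eta (w - eta^-1 *: D) z -> g y \is a fin_num ->
  g z \is a fin_num /\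
  fine (g z) + dotv D (z - w) + eta / 2 * enorm (z - w) ^+ 2
    <= fine (g y) + dotv D (y - w) + eta / 2 * enorm (y - w) ^+ 2.
Proof.
move=> eta_gt0 g_ninfty z_prox gy_fin; have := z_prox y.
rewrite -(fineK gy_fin); case gz_eq : (g z) => [gz| |]; last 2 first.
- by rewrite mulry gtr0_sg ?invr_gt0 // mul1e.
- by have := g_ninfty z; rewrite gz_eq.
rewrite -!EFinM -!EFinD lee_fin => prox_ineq; split => //.
have shiftE u : u - (w - eta^-1 *: D) = (u - w) + eta^-1 *: D.
  by rewrite opprB addrA addrAC.
move: prox_ineq; rewrite !shiftE !sqr_enormD !dotvZr !(dotvC _ D).
set Q := enorm (eta^-1 *: D) ^+ 2.
have scaleE (a b c : R) : a + b + eta / 2 * c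
    = eta * (eta^-1 * a + 2^-1 * (c + 2 * (eta^-1 * b) + Q)) - eta / 2 * Q.
  by field; rewrite gt_eqF.
by rewrite !scaleE lerD2r => /(ler_wpM2l (ltW eta_gt0)).
Qed.

Section Window.
Variables (R : realType) (p : nat) (F : 'rV[R]_p -> \bar R) (x : nat -> 'rV[R]_p).
Variable r : nat.

Lemma le_Fmax_window t s : (s <= t)%N -> (t < s + r)%N ->
  (F (x s) <= Fmax_window F x r t)%E.
Proof.
move=> s_le t_lt; have i_lt : (t - s < r)%N by lia.
have := @le_bigmax_cond _ _ _ -oo%E (Ordinal i_lt) (fun i : 'I_r => (i <= t)%N)
  (fun i : 'I_r => F (x (t - i)%N)).
by rewrite /= subKn //; apply; rewrite leq_subr.
Qed.

Lemma Fmax_window_attained t : (0 < r)%N ->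
  exists s, [/\ (s <= t)%N, (t < s + r)%N & Fmax_window F x r t = F (x s)].
Proof.
move=> r_gt0.
have [//| i _ | i i_le max_eq] := @eq_bigmax _ _ _ -oo%E (Ordinal r_gt0)
  (fun i : 'I_r => (i <= t)%N) (fun i : 'I_r => F (x (t - i)%N)); first exact: leNye.
exists (t - i)%N; split; [exact: leq_subr | | exact: max_eq].
by move: i_le (ltn_ord i); rewrite unfold_in /=; lia.
Qed.

End Window.

Section NonmonotoneDescent.
Variables (R : realType) (phi Phi d : nat -> R) (r : nat) (c m : R).
Hypotheses (r_gt0 : (0 < r)%N) (c_gt0 : 0 < c) (d_ge0 : forall t, 0 <= d t).
Hypothesis le_Phi : forall t s, (s <= t)%N -> (t < s + r)%N -> phi s <= Phi t.
Hypothesis Phi_attained :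
  forall t, exists s, [/\ (s <= t)%N, (t < s + r)%N & Phi t = phi s].
Hypothesis descent : forall t, phi t.+1 + c * d t ^+ 2 <= Phi t.

Lemma Phi_nonincreasing t : Phi t.+1 <= Phi t.
Proof.
have [s [s_le t_lt ->]] := Phi_attained t.+1.
have [->|s_neq] := eqVneq s t.+1; last by apply: le_Phi; lia.
by apply: le_trans (descent t); rewrite lerDl mulr_ge0 ?sqr_ge0 ?ltW.
Qed.

Lemma Phi_le s t : (s <= t)%N -> Phi t <= Phi s.
Proof.
move=> /subnK <-; elim: (t - s)%N => [|k IHk]; first by rewrite add0n.
by apply: le_trans IHk; rewrite addSn; exact: Phi_nonincreasing.
Qed.

Lemma phi_le_phi0 t : phi t <= phi 0.
Proof.
have [s [s_le _]] := Phi_attained 0; move: s_le; rewrite leqn0 => /eqP -> <-.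
by apply: le_trans (Phi_le (leq0n t)); apply: le_Phi; lia.
Qed.

Hypothesis Phi_ge : forall t, m <= Phi t.
Hypothesis phi_step_cont : forall e, 0 < e -> exists2 del, 0 < del &
  forall t, d t < del -> `|phi t.+1 - phi t| < e.

Let Phi_inf := inf (range Phi).

Let range_Phi_lbound : has_lbound (range Phi).
Proof. by exists m => _ [t _ <-]. Qed.

Let Phi_inf_le t : Phi_inf <= Phi t.
Proof. by apply: (ge_inf range_Phi_lbound); exists t. Qed.

Let Phi_near_inf e : 0 < e -> exists N, forall t, (N <= t)%N -> Phi t < Phi_inf + e.
Proof.
move=> e_gt0; have [|_ [N _ <-] PhiN_lt] := @inf_adherent _ (range Phi) _ e_gt0.
  by split; [exists (Phi 0), 0%N | exact: range_Phi_lbound].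
by exists N => t N_le; apply: le_lt_trans PhiN_lt; exact: Phi_le.
Qed.

Let short_step_near_inf e : 0 < e -> exists2 e1, 0 < e1 &
  forall t, Phi_inf - e1 < phi t.+1 -> Phi t < Phi_inf + e1 -> d t < e.
Proof.
move=> e_gt0; exists (c * e ^+ 2 / 2); first by rewrite divr_gt0 ?mulr_gt0 ?exprn_gt0.
move=> t phi_gt Phi_lt; have descent_t := descent t.
have : c * d t ^+ 2 < c * e ^+ 2 by lra.
by rewrite ltr_pM2l // ltr_pXn2r // nnegrE ?d_ge0 ?ltW.
Qed.

(* Backward induction from a window argmax s: the step ending at s - k is short,
   so by [phi_step_cont] phi (s - k - 1) is close to phi (s - k), hence to the
   infimum. *)
Let argmax_near_inf n e : 0 < e -> exists N, forall t s, (N <= t)%N ->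
  (s <= t)%N -> (t < s + r)%N -> Phi t = phi s ->
  forall k, (k <= n)%N -> (k < s)%N /\ Phi_inf - e < phi (s - k).
Proof.
elim: n e => [|n IHn] e e_gt0.
  exists r => t s r_le s_le t_lt Phi_eq k; rewrite leqn0 => /eqP ->.
  by rewrite subn0 -Phi_eq; split; [lia | apply: lt_le_trans (Phi_inf_le t); lra].
have e2_gt0 : 0 < e / 2 by rewrite divr_gt0.
have [del del_gt0 del_cont] := phi_step_cont e2_gt0.
have [e1 e1_gt0 e1_small] := short_step_near_inf del_gt0.
have [N1 N1_near] := IHn (Num.min (e / 2) e1) (ltac:(by rewrite lt_min e2_gt0)).
have [N2 N2_near] := Phi_near_inf e1_gt0.
have [min_le_e2 min_le_e1] : Num.min (e / 2) e1 <= e / 2 /\ Num.min (e / 2) e1 <= e1.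
  by rewrite !ge_min !lexx orbT.
exists (maxn N1 (N2 + n + r + 2)) => t s N_le s_le t_lt Phi_eq k k_le.
have [N1_le N2_le] : (N1 <= t)%N /\ (N2 + n + r + 2 <= t)%N by lia.
have [/eqP ->|k_neq] := boolP (k == n.+1); last first.
  have [k_lt phi_gt] := N1_near t s N1_le s_le t_lt Phi_eq k (ltac:(lia)).
  by split => //; lra.
have [n_lt phi_gt] := N1_near t s N1_le s_le t_lt Phi_eq n (leqnn n).
split; first lia.
have s_nE : (s - n)%N = (s - n.+1).+1 by lia.
rewrite s_nE in phi_gt.
have d_lt : d (s - n.+1)%N < del.
  by apply: e1_small; [lra | apply: N2_near; lia].
by have := del_cont _ d_lt; rewrite ltr_norml => /andP[]; lra.
Qed.

Lemma steps_vanish e : 0 < e -> exists N, forall t, (N <= t)%N -> d t < e.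
Proof.
move=> e_gt0; have [e1 e1_gt0 e1_small] := short_step_near_inf e_gt0.
have [N1 N1_near] := argmax_near_inf r.-1 e1_gt0.
have [N2 N2_near] := Phi_near_inf e1_gt0.
exists (maxn N1 N2) => t N_le.
have [s [s_le t_lt Phi_eq]] := Phi_attained (t + r).
have [_ phi_gt] :=
  N1_near (t + r)%N s (ltac:(lia)) s_le t_lt Phi_eq (s - t.+1)%N (ltac:(lia)).
rewrite (_ : (s - (s - t.+1))%N = t.+1) in phi_gt; last by lia.
by apply: e1_small => //; apply: N2_near; lia.
Qed.

End NonmonotoneDescent.

Section GIST_iterates.
Variables (R : realType) (p : nat) (f : 'rV[R]_p -> R) (gradf : 'rV[R]_p -> 'rV[R]_p)
  (L : R) (g : 'rV[R]_p -> \bar R) (rho eta_lo eta_hi sigma : R) (r : nat)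
  (x : nat -> 'rV[R]_p) (eta heta : nat -> R) (l : nat -> nat).
Local Notation F := (fun y => ((f y)%:E + g y)%E).
Hypotheses (gradfP : is_gradient f gradf) (gradf_lip : L_smooth L gradf)
  (g_ninfty : forall y, g y != -oo%E)
  (rho_gt1 : 1 < rho) (eta_lo_gt0 : 0 < eta_lo) (sigma_gt0 : 0 < sigma)
  (sigma_lt1 : sigma < 1) (r_gt0 : (0 < r)%N) (F_x0_lt : (F (x 0) < +oo)%E).
Hypothesis gist_step : forall t,
  [/\ eta_lo <= heta t <= eta_hi,
      eta t = rho ^+ l t * heta t,
      (forall l', (l' < l t)%N ->
         exists z, is_prox g (rho ^+ l' * heta t)
                     (x t - (rho ^+ l' * heta t)^-1 *: gradf (x t)) z /\
                   ~ accept F x r sigma t (rho ^+ l' * heta t) z),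
      is_prox g (eta t) (x t - (eta t)^-1 *: gradf (x t)) (x t.+1)
    & accept F x r sigma t (eta t) (x t.+1)].

Lemma F_fin_num y : (F y \is a fin_num) = (g y \is a fin_num).
Proof. by case: (g y) (g_ninfty y). Qed.

Lemma F_ninfty y : F y != -oo%E.
Proof. by case: (g y) (g_ninfty y). Qed.

Lemma heta_gt0 t : 0 < heta t.
Proof. by have [/andP[heta_ge _] _ _ _ _] := gist_step t; exact: lt_le_trans heta_ge. Qed.

Lemma eta_ge t : eta_lo <= eta t.
Proof.
have [/andP[heta_ge _] -> _ _ _] := gist_step t.
by rewrite -[eta_lo]mul1r ler_pM ?exprn_ege1 // ltW.
Qed.

Lemma eta_gt0 t : 0 < eta t.
Proof. exact: lt_le_trans eta_lo_gt0 (eta_ge t). Qed.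

Lemma F_iterate_fin_num t : F (x t) \is a fin_num.
Proof.
elim/ltn_ind: t => -[_|t IH]; rewrite fin_numE F_ninfty /= -ltey //.
have [_ _ _ _ accepted] := gist_step t.
have [s [s_le _ max_eq]] := Fmax_window_attained F x t r_gt0.
move: accepted; rewrite /accept max_eq -(fineK (IH s _)) ?ltnS //.
by rewrite -EFinB => /le_lt_trans; apply; exact: ltry.
Qed.

Let phi t := fine (F (x t)).
Let Phi t := fine (Fmax_window F x r t).

Lemma F_iterateE t : F (x t) = (phi t)%:E.
Proof. by rewrite fineK ?F_iterate_fin_num. Qed.

Lemma g_iterateE t : g (x t) = (phi t - f (x t))%:E.
Proof.
by have := F_iterateE t; case: (g (x t)) => [a| |] //= [<-]; congr (_%:E); ring.
Qed.

Lemma Fmax_windowE t : Fmax_window F x r t = (Phi t)%:E.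
Proof.
have [s [_ _ max_eq]] := Fmax_window_attained F x t r_gt0.
by rewrite /Phi max_eq fineK ?F_iterate_fin_num.
Qed.

Lemma le_Phi t s : (s <= t)%N -> (t < s + r)%N -> phi s <= Phi t.
Proof.
move=> s_le t_lt.
by have := le_Fmax_window F x s_le t_lt; rewrite F_iterateE Fmax_windowE.
Qed.

Lemma Phi_attained t : exists s, [/\ (s <= t)%N, (t < s + r)%N & Phi t = phi s].
Proof.
have [s [s_le t_lt max_eq]] := Fmax_window_attained F x t r_gt0.
by exists s; rewrite /Phi max_eq.
Qed.

Lemma phi_descent t :
  phi t.+1 + sigma * eta_lo / 2 * enorm (x t.+1 - x t) ^+ 2 <= Phi t.
Proof.
have [_ _ _ _ accepted] := gist_step t; move: accepted.
rewrite /accept F_iterateE Fmax_windowE -EFinB lee_fin => accepted.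
have : sigma * eta_lo / 2 * enorm (x t.+1 - x t) ^+ 2
    <= sigma * eta t / 2 * enorm (x t.+1 - x t) ^+ 2.
  by rewrite ler_wpM2r ?sqr_ge0 // ler_wpM2r // ler_wpM2l ?eta_ge ?ltW.
lra.
Qed.

Lemma prox_accepted t et z : 0 < et -> 2 * `|L| <= et * (1 - sigma) ->
  is_prox g et (x t - et^-1 *: gradf (x t)) z -> accept F x r sigma t et z.
Proof.
move=> et_gt0 et_large z_prox.
have gx_fin : g (x t) \is a fin_num by rewrite -F_fin_num F_iterate_fin_num.
have [gz_fin] := is_prox_le et_gt0 g_ninfty z_prox gx_fin.
rewrite subrr enorm0 dotv0r expr0n /= mulr0 !addr0 g_iterateE /= => prox_le.
have descent := L_smooth_descent gradfP (x t) z gradf_lip.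
rewrite /accept Fmax_windowE -(fineK gz_fin) -EFinD -EFinB lee_fin.
have := le_Phi (leqnn t) (ltac:(lia)).
have : sigma * et / 2 * enorm (z - x t) ^+ 2 <= (et / 2 - `|L|) * enorm (z - x t) ^+ 2.
  by rewrite ler_wpM2r ?sqr_ge0 //; lra.
lra.
Qed.

(* A rejected trial step eta' satisfies eta' (1 - sigma) < 2 |L| by [prox_accepted];
   the accepted step is at most rho times the last rejected one. *)
Definition eta_max := Num.max eta_hi (rho * (2 * `|L| / (1 - sigma))).

Lemma eta_le_max t : eta t <= eta_max.
Proof.
have [/andP[_ heta_le] -> rejected _ _] := gist_step t.
case lt_eq : (l t) => [|k]; first by rewrite expr0 mul1r le_max heta_le.
have [z [z_prox not_accepted]] := rejected k (ltac:(lia)).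
have rho_gt0 : 0 < rho := lt_trans ltr01 rho_gt1.
have trial_gt0 : 0 < rho ^+ k * heta t by rewrite mulr_gt0 ?heta_gt0 ?exprn_gt0.
have trial_small : rho ^+ k * heta t * (1 - sigma) < 2 * `|L|.
  by rewrite ltNge; apply/negP => large; apply/not_accepted/prox_accepted.
rewrite le_max exprS -mulrA ler_wpM2l ?orbT ?(ltW rho_gt0) //.
by rewrite ler_pdivlMr ?subr_gt0 // ltW.
Qed.

Let c_gt0 : 0 < sigma * eta_lo / 2.
Proof. by rewrite divr_gt0 ?mulr_gt0. Qed.

Lemma phi_le_init t : phi t <= phi 0.
Proof. exact: phi_le_phi0 c_gt0 le_Phi Phi_attained phi_descent t. Qed.

Variable K : set 'rV[R]_p.
Hypotheses (K_compact : compact K) (K_x : forall t, K (x t))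
  (F_cont : {within K, continuous F}).

Lemma phi_step_cont (e : R) : 0 < e -> exists2 del, 0 < del &
  forall t, enorm (x t.+1 - x t) < del -> `|phi t.+1 - phi t| < e.
Proof.
move=> e_gt0.
(* F may be +oo on K; truncated at phi 0 it becomes real-valued and continuous,
   and it still agrees with F on the iterates. *)
have h_cont := within_continuous_fine_min (c := phi 0) F_ninfty F_cont.
have [del del_gt0 h_unif] := compact_unif_continuous K_compact h_cont e_gt0.
exists del => // t /enorm_ball step_ball.
have hE s : fine (Order.min (F (x s)) (phi 0)%:E) = phi s.
  by rewrite F_iterateE min_l ?lee_fin ?phi_le_init.
by rewrite distrC -(hE t) -(hE t.+1); apply: h_unif.
Qed.

Hypothesis F_lbound : exists m : R, forall y, (m%:E <= F y)%E.

Lemma iterate_steps_vanish (e : R) : 0 < e ->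
  exists N, forall t, (N <= t)%N -> enorm (x t.+1 - x t) < e.
Proof.
have [m F_ge] := F_lbound.
have Phi_ge t : m <= Phi t.
  by apply: le_trans (le_Phi (leqnn t) _); [have := F_ge (x t); rewrite F_iterateE | lia].
exact: steps_vanish r_gt0 c_gt0 (fun t => enorm_ge0 _) le_Phi Phi_attained phi_descent
  Phi_ge phi_step_cont e.
Qed.

Lemma step_prox t : is_prox g (eta t) (x t - (eta t)^-1 *: gradf (x t)) (x t.+1).
Proof. by have [] := gist_step t. Qed.

Lemma g_step_model t y : g y \is a fin_num ->
  (g (x t.+1) <= (fine (g y) + dotv (gradf (x t)) (y - x t.+1)
                   + eta_max / 2 * enorm (y - x t) ^+ 2)%:E)%E.
Proof.
move=> gy_fin.
have [gz_fin prox_le] := is_prox_le (eta_gt0 t) g_ninfty (step_prox t) gy_fin.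
rewrite -(fineK gz_fin) lee_fin.
have -> : y - x t.+1 = (y - x t) - (x t.+1 - x t) by rewrite opprB subrKA.
have : eta t / 2 * enorm (y - x t) ^+ 2 <= eta_max / 2 * enorm (y - x t) ^+ 2.
  by rewrite ler_wpM2r ?sqr_ge0 // ler_wpM2r ?eta_le_max.
have : 0 <= eta t / 2 * enorm (x t.+1 - x t) ^+ 2.
  by rewrite mulr_ge0 ?sqr_ge0 // divr_ge0 // ltW ?eta_gt0.
rewrite dotvBr; lra.
Qed.

Variable xs : 'rV[R]_p.
Hypothesis xs_acc : accumulation_point x xs.

Lemma accumulation_step (del : R) : 0 < del ->
  exists t, enorm (x t - xs) < del /\ enorm (x t.+1 - xs) < del.
Proof.
move=> del_gt0; have del2_gt0 : 0 < del / 2 by rewrite divr_gt0.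
have [N steps_lt] := iterate_steps_vanish del2_gt0.
have [t N_le xt_lt] := xs_acc del2_gt0 N.
exists t; split; first lra.
rewrite -(subrKA (x t)) (le_lt_trans (ler_enormD _ _)) //.
by have := steps_lt t N_le; lra.
Qed.

Hypothesis g_lsc : lower_semicontinuous g.

Lemma g_limit_model y : g y \is a fin_num ->
  (g xs <= (fine (g y) + dotv (gradf xs) (y - xs)
             + eta_max / 2 * enorm (y - xs) ^+ 2)%:E)%E.
Proof.
move=> gy_fin; apply: lower_semicontinuous_le g_lsc _ => e e_gt0.
have eta_max_ge0 : 0 <= eta_max / 2.
  by rewrite divr_ge0 // ltW // (lt_le_trans (eta_gt0 0)) ?eta_le_max.
have [del del_gt0 model_near] := L_smooth_model_near y xs gradf_lip eta_max_ge0 e_gt0.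
have [|t [xt_near xt1_near]] := accumulation_step (del := Num.min del e).
  by rewrite lt_min del_gt0.
move: xt_near xt1_near; rewrite !lt_min => /andP[xt_near _] /andP[xt1_near xt1_lt].
exists (x t.+1); split => //; apply: le_trans (g_step_model t gy_fin) _.
by rewrite lee_fin; have := model_near _ _ xt_near xt1_near; lra.
Qed.

Lemma g_xs_fin_num : g xs \is a fin_num.
Proof.
have gx0_fin : g (x 0) \is a fin_num by rewrite -F_fin_num F_iterate_fin_num.
by rewrite fin_numE g_ninfty -ltey (le_lt_trans (g_limit_model gx0_fin)) ?ltry.
Qed.

Lemma g_quadratic_minorant d tau : 0 < tau ->
  (g xs <= g (xs + tau *: d)
          + (tau * dotv (gradf xs) d + tau ^+ 2 * (eta_max / 2 * enorm d ^+ 2))%:E)%E.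
Proof.
move=> tau_gt0; case gy_eq : (g (xs + tau *: d)) => [b| |] /=; last 2 first.
- by rewrite leey.
- by have := g_ninfty (xs + tau *: d); rewrite gy_eq.
have := g_limit_model (y := xs + tau *: d); rewrite gy_eq => /(_ isT).
rewrite (addrC xs) addrK dotvZr enormZ gtr0_norm // exprMn /= => /le_trans; apply.
by rewrite -EFinD lee_fin; lra.
Qed.

Hypothesis g_dir_diff : forall y, (g y < +oo)%E -> dir_differentiable_at g y.

Lemma iterate_limit_d_stationary : d_stationary F xs.
Proof.
have [_ g_dir] : dir_differentiable_at g xs.
  by apply: g_dir_diff; move/fin_numPlt/andP: g_xs_fin_num => [].
have F_dir := has_dir_deriv_gradient_add gradfP g_xs_fin_num.
split; first split; first by rewrite F_fin_num g_xs_fin_num.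
  by move=> d; have [lg g_lim] := g_dir d; eexists; exact: F_dir g_lim.
move=> d lF F_lim; have [lg g_lim] := g_dir d.
rewrite (cvg_unique (@ereal_hausdorff R) F_lim (F_dir _ _ g_lim)).
have := has_dir_deriv_ge g_xs_fin_num (g_quadratic_minorant d) g_lim.
by case: lg {g_lim} => [a| |] //=; rewrite ?lee_fin ?leey //; lra.
Qed.

End GIST_iterates.

Unset Implicit Arguments.

Theorem theorem1 (R : realType) (p : nat)
  (f : 'rV[R]_p -> R) (gradf : 'rV[R]_p -> 'rV[R]_p) (L : R)
  (g : 'rV[R]_p -> \bar R)
  (rho eta_lo eta_hi sigma : R) (r : nat)
  (x : nat -> 'rV[R]_p) (eta : nat -> R) :
  is_gradient f gradf ->
  L_smooth L gradf ->
  proper_fun g ->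
  lower_semicontinuous g ->
  (forall y, (g y < +oo)%E -> dir_differentiable_at g y) ->
  (exists m : R, forall y, (m%:E <= (f y)%:E + g y)%E) ->
  (exists e : R, 0 < e /\ exists m : R,
      forall y, (m%:E <= g y + (e / 2 * enorm y ^+ 2)%:E)%E) ->
  1 < rho -> 0 < eta_lo -> eta_lo < eta_hi -> 0 < sigma < 1 -> (1 <= r)%N ->
  GIST_sequence f gradf g rho eta_lo eta_hi sigma r x eta ->
  (exists M : R, forall t, enorm (x t) <= M) ->
  (exists K : set 'rV[R]_p, compact K /\ (forall t, K (x t)) /\
      {within K, continuous (fun y => ((f y)%:E + g y)%E)}) ->
  forall xs, accumulation_point x xs ->
    d_stationary (fun y => ((f y)%:E + g y)%E) xs.
Proof.
move=> gradfP gradf_lip [g_ninfty _] g_lsc g_dir_diff F_lbound _ rho_gt1 eta_lo_gt0 _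
  /andP[sigma_gt0 sigma_lt1] r_gt0 [F_x0_lt [heta [l gist_step]]] _
  [K [K_compact [K_x F_cont]]] xs xs_acc.
exact: (iterate_limit_d_stationary gradfP gradf_lip g_ninfty rho_gt1 eta_lo_gt0
  sigma_gt0 sigma_lt1 r_gt0 F_x0_lt gist_step K_compact K_x F_cont F_lbound xs_acc
  g_lsc g_dir_diff).
Qed.
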